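(* Assume that each $f_m^j$ is $L$-smooth. In the setting described in the context, for every meta-epoch $t$, $$\Big\|\frac1R\sum_{r=0}^{R-1}\frac1C\sum_{m\in S_t^{\lambda_r}}\frac1N\sum_{j=0}^{N-1}\nabla f_m^{\pi_m^j}(x^{r,j}_{m,t})\Big\|^2\le 2L^2V_t+4L\big(f(x_t)-f(x_\star)\big),$$ where $V_t=\frac{1}{RCN}\sum_{r=0}^{R-1}\sum_{m\in S_t^{\lambda_r}}\sum_{j=0}^{N-1}\|x_t-x^{r,j}_{m,t}\|^2$.
   Context: Setting. There are $M$ clients, each holding $N$ data points. For $m\in[M]$ and $j\in\{0,\dots,N-1\}$, $f_m^j:\mathbb{R}^d\to\mathbb{R}$ is differentiable. Define $f_m=\frac1N\sum_j f_m^j$ and $f=\frac1M\sum_m f_m$, and let $x_\star$ be a minimizer of $f$. $L$-smooth means the gradient is $L$-Lipschitz. Algorithm RR-CLI. Let $C$ be a cohort size with $M=CR$, and let $\gamma,\eta,\theta>0$. In meta-epoch $t$: - The clients are partitioned into $R$ disjoint cohorts of size $C$, taken in order $S_t^{\lambda_0},\dots,S_t^{\lambda_{R-1}}$. - Each client $m$ has a permutation $\pi_m=(\pi_m^0,\dots,\pi_m^{N-1})$ of its data indices. - Set $x_t^0=x_t$. For $r=0,\dots,R-1$ and $m\in S_t^{\lambda_r}$, set $x^{r,0}_{m,t}=x^r_t$ and $x^{r,j+1}_{m,t}=x^{r,j}_{m,t}-\gamma\nabla f_m^{\pi_m^j}(x^{r,j}_{m,t})$ for $j=0,\dots,N-1$.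 - The server sets $x^{r+1}_t=x^r_t-\eta\frac1C\sum_{m\in S_t^{\lambda_r}}\frac{x^r_t-x^{r,N}_{m,t}}{\gamma N}$. - Finally, $x_{t+1}=x_t-\theta\frac{x_t-x^R_t}{\eta R}$. *)

From HB Require Import structures.
From mathcomp Require Import all_boot all_order all_algebra.
From mathcomp Require Import fingroup perm.
From mathcomp Require Import all_classical all_reals all_analysis.
Set Implicit Arguments. Unset Strict Implicit. Unset Printing Implicit Defensive.
Import Order.TTheory GRing.Theory Num.Theory.
Import numFieldNormedType.Exports.
Local Open Scope ring_scope.

Section RRCLI.
Variables (R : realType) (d : nat).

Definition sqnorm (v : 'rV[R]_d) : R := \sum_(i < d) (v 0 i) ^+ 2.
Definition enorm (v : 'rV[R]_d) : R := Num.sqrt (sqnorm v).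

Definition grad (f : 'rV[R]_d -> R) (x : 'rV[R]_d) : 'rV[R]_d :=
  \row_(i < d) 'D_(delta_mx 0 i) f x.

Definition L_smooth (L : R) (f : 'rV[R]_d -> R) : Prop :=
  (forall x, differentiable f x) /\
  (forall x y, enorm (grad f x - grad f y) <= L * enorm (x - y)).

(* local iterates x^{r,j}: x^{0} = x0, x^{j+1} = x^j - gamma g_j(x^j), j < N,
   where g j = gradient of f_m^{pi_m^j} *)
Fixpoint local_iter (N : nat) (gamma : R) (g : 'I_N -> 'rV[R]_d -> 'rV[R]_d)
  (x0 : 'rV[R]_d) (j : nat) : 'rV[R]_d :=
  match j with
  | 0 => x0
  | j'.+1 => let y := local_iter gamma g x0 j' in
             match (insub j' : option 'I_N) with
             | Some o => y - gamma *: g o y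
             | None => y
             end
  end.

(* server iterates x^r_t within one meta-epoch;
   S r = cohort S_t^{lambda_r}, G m j x = gradient of f_m^{pi_m^j} at x *)
Fixpoint server_iter (M N C Rn : nat) (gamma eta : R)
  (S : 'I_Rn -> {set 'I_M}) (G : 'I_M -> 'I_N -> 'rV[R]_d -> 'rV[R]_d)
  (xt : 'rV[R]_d) (r : nat) : 'rV[R]_d :=
  match r with
  | 0 => xt
  | r'.+1 => let y := server_iter C gamma eta S G xt r' in
             match (insub r' : option 'I_Rn) with
             | Some o => y - eta *: ((C%:R)^-1 *:
                   \sum_(m in S o) ((gamma * N%:R)^-1 *:
                       (y - local_iter gamma (G m) y N)))
             | None => y
             end
  end.

Fixpoint meta_iter (M N C Rn : nat) (gamma eta theta : R)
  (S : nat -> 'I_Rn -> {set 'I_M}) (G : nat -> 'I_M -> 'I_N -> 'rV[R]_d -> 'rV[R]_d)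
  (x0 : 'rV[R]_d) (t : nat) : 'rV[R]_d :=
  match t with
  | 0 => x0
  | t'.+1 => let x := meta_iter C gamma eta theta S G x0 t' in
             x - (theta / (eta * Rn%:R)) *:
                   (x - server_iter C gamma eta (S t') (G t') x Rn)
  end.

Definition favg (M N : nat) (f : 'I_M -> 'I_N -> 'rV[R]_d -> R) (x : 'rV[R]_d) : R :=
  (M%:R)^-1 * \sum_(m < M) ((N%:R)^-1 * \sum_(j < N) f m j x).

End RRCLI.

From HB Require Import structures.
From mathcomp Require Import all_boot all_order all_algebra.
From mathcomp Require Import fingroup perm.
From mathcomp Require Import all_classical all_reals all_analysis.
From mathcomp Require Import ring lra.
Import Order.TTheory GRing.Theory Num.Theory.
Import numFieldNormedType.Exports.
Local Open Scope ring_scope.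

(* Split every local gradient as
     grad f_m^j (x^{r,j})
       = (grad f_m^j (x^{r,j}) - grad f_m^j (x_t)) + grad f_m^j (x_t).
   The cohorts partition the clients and each pi_m permutes the data, so the
   second parts average exactly to grad f (x_t); by Jensen and the Lipschitz
   gradients, the first parts average to a vector of squared norm at most
   L^2 V_t.  Then |a + b|^2 <= 2 |a|^2 + 2 |b|^2, and
   |grad f (x_t)|^2 <= 2 L (f (x_t) - f (x_star)) because the descent lemma
   for the average f, at the point x_t - grad f (x_t) / L, cannot go below
   f (x_star). *)

Section Euclidean.
Context {R : realType} {d : nat}.
Implicit Types (u v w : 'rV[R]_d).

Definition dot u v : R := \sum_(i < d) u 0 i * v 0 i.

Lemma sqnorm_ge0 u : 0 <= sqnorm u.
Proof. by apply: sumr_ge0 => i _; rewrite sqr_ge0. Qed.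

Lemma sqnorm0 : sqnorm (0 : 'rV[R]_d) = 0.
Proof. by rewrite /sqnorm big1 // => i _; rewrite mxE expr0n. Qed.

Lemma sqnorm_eq0 u : (sqnorm u == 0) = (u == 0).
Proof.
apply/idP/eqP => [|->]; last by rewrite sqnorm0.
rewrite /sqnorm psumr_eq0 => [/allP u0|i _]; last exact: sqr_ge0.
apply/rowP => i; have /(_ (mem_index_enum _)) := u0 i.
by rewrite mxE sqrf_eq0 => /eqP.
Qed.

Lemma sqr_enorm u : enorm u ^+ 2 = sqnorm u.
Proof. by rewrite sqr_sqrtr // sqnorm_ge0. Qed.

Lemma sqnormZ a u : sqnorm (a *: u) = a ^+ 2 * sqnorm u.
Proof.
by rewrite /sqnorm mulr_sumr; apply: eq_bigr => i _; rewrite mxE exprMn.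
Qed.

Lemma sqnormN u : sqnorm (- u) = sqnorm u.
Proof. by rewrite -scaleN1r sqnormZ sqrrN expr1n mul1r. Qed.

Lemma sqnormD_le u v : sqnorm (u + v) <= 2 * sqnorm u + 2 * sqnorm v.
Proof.
rewrite /sqnorm !mulr_sumr -big_split /=; apply: ler_sum => i _; rewrite mxE.
have := sqr_ge0 (u 0 i - v 0 i); lra.
Qed.

Lemma dotvv u : dot u u = sqnorm u.
Proof. by apply: eq_bigr => i _; rewrite expr2. Qed.

Lemma dotZl a u v : dot (a *: u) v = a * dot u v.
Proof. by rewrite /dot mulr_sumr; apply: eq_bigr => i _; rewrite mxE mulrA. Qed.

Lemma dotZr a u v : dot u (a *: v) = a * dot u v.
Proof. by rewrite /dot mulr_sumr; apply: eq_bigr => i _; rewrite mxE mulrCA. Qed.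

Lemma dotBl u w v : dot (u - w) v = dot u v - dot w v.
Proof. by rewrite /dot -sumrB; apply: eq_bigr => i _; rewrite !mxE mulrBl. Qed.

Lemma dot_suml (I : Type) (s : seq I) (P : pred I) (F : I -> 'rV[R]_d) v :
  dot (\sum_(i <- s | P i) F i) v = \sum_(i <- s | P i) dot (F i) v.
Proof.
rewrite /dot; under eq_bigr do rewrite summxE mulr_suml.
by rewrite exchange_big.
Qed.

Lemma sqnorm_le_of_enorm_le (a : R) u w :
  enorm u <= a * enorm w -> sqnorm u <= a ^+ 2 * sqnorm w.
Proof.
move=> uw; rewrite -!sqr_enorm -exprMn.
have u_ge0 : 0 <= enorm u := sqrtr_ge0 _.
nra.
Qed.

(* Coordinatewise AM-GM: [2 u_i v_i <= u_i^2 / a + a v_i^2]. *)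
Lemma dot_le_of_sqnorm_le (a : R) u v :
  0 <= a -> sqnorm u <= a ^+ 2 * sqnorm v -> dot u v <= a * sqnorm v.
Proof.
rewrite le_eqVlt => /predU1P[<- | a_gt0] uv.
  move: uv; rewrite expr0n /= mul0r => u_le0.
  have /eqP -> : u == 0 by rewrite -sqnorm_eq0 eq_le u_le0 sqnorm_ge0.
  by rewrite /dot big1 // => i _; rewrite mxE mul0r.
have amgm : 2 * dot u v <= sqnorm u / a + a * sqnorm v.
  rewrite /dot /sqnorm mulr_sumr mulr_suml mulr_sumr -big_split /=.
  apply: ler_sum => i _.
  have -> : u 0 i ^+ 2 / a + a * v 0 i ^+ 2
          = 2 * (u 0 i * v 0 i) + (u 0 i - a * v 0 i) ^+ 2 / a.
    by field; rewrite gt_eqF.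
  by rewrite lerDl divr_ge0 ?sqr_ge0 ?ltW.
have : sqnorm u / a <= a * sqnorm v by rewrite ler_pdivrMr // mulrAC -expr2.
lra.
Qed.

Lemma sqr_sum_le {I : finType} (A : {pred I}) (y : I -> R) :
  (\sum_(i in A) y i) ^+ 2 <= #|A|%:R * \sum_(i in A) y i ^+ 2.
Proof.
rewrite expr2 mulr_suml; under eq_bigr do rewrite mulr_sumr.
apply: (@le_trans _ _ (\sum_(i in A) \sum_(k in A) (y i ^+ 2 + y k ^+ 2) / 2)).
  apply: ler_sum => i _; apply: ler_sum => k _.
  have := sqr_ge0 (y i - y k); lra.
set Q := \sum_(i in A) y i ^+ 2.
rewrite (eq_bigr (fun i => (y i ^+ 2 *+ #|A| + Q) / 2)) => [|i _]; last first.
  by rewrite -mulr_suml big_split /= sumr_const.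
rewrite -mulr_suml big_split /= sumrMnl sumr_const -/Q -mulr_natl.
by rewrite le_eqVlt; apply/orP; left; apply/eqP; field.
Qed.

Lemma sqnorm_avg_le {I : finType} (A : {pred I}) (F : I -> 'rV[R]_d) :
  sqnorm (#|A|%:R^-1 *: \sum_(i in A) F i)
    <= #|A|%:R^-1 * \sum_(i in A) sqnorm (F i).
Proof.
rewrite /sqnorm exchange_big /= mulr_sumr; apply: ler_sum => k _.
rewrite mxE summxE exprMn.
have nK : #|A|%:R^-1 ^+ 2 * #|A|%:R = #|A|%:R^-1 :> R.
  have [->|A_gt0] := posnP #|A|; first by rewrite invr0 expr0n mul0r.
  by field; rewrite pnatr_eq0 -lt0n.
by rewrite -[in leRHS]nK -mulrA ler_wpM2l ?sqr_ge0 ?sqr_sum_le.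
Qed.

End Euclidean.

Section Smoothness.
Context {R : realType} {d : nat}.
Implicit Types (f phi : 'rV[R]_d -> R) (g u v x y : 'rV[R]_d).

Lemma derive_grad f x v : differentiable f x -> 'D_v f x = dot (grad f x) v.
Proof.
move=> df; rewrite deriveE // {1}(row_sum_delta v) linear_sum /dot.
by apply: eq_bigr => i _; rewrite linearZ /= -deriveE // /grad mxE mulrC.
Qed.

Lemma is_derive_line f x v s : differentiable f (s *: v + x) ->
  is_derive s 1 (fun t : R => f (t *: v + x)) (dot (grad f (s *: v + x)) v).
Proof.
move=> df; set y := s *: v + x.
have shiftE : (fun h : R => h^-1 *: (((fun t => f (t *: v + x)) \o shift s)
                                       (h *: 1) - f y))
            = (fun h : R => h^-1 *: ((f \o shift y) (h *: v) - f y)).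
  by apply/funext => h /=; rewrite [h%:A]mulr1 scalerDl addrA.
apply: DeriveDef; first by rewrite /derivable shiftE; exact: diff_derivable.
by rewrite /derive shiftE -/(derive f y v) derive_grad.
Qed.

Lemma is_derive_quadratic (c K t : R) :
  is_derive t 1 (fun s : R => s * c + K * s ^+ 2) (c + 2 * K * t).
Proof.
have lin : is_derive t 1 ((@id R) * cst c) (id t *: 0 + cst c t *: 1).
  exact: is_deriveM.
have quad : is_derive t 1 (cst K * (@id R) ^+ 2)
   (cst K t *: ((2%:R * id t ^+ 1) *: 1) + ((@id R) ^+ 2) t *: 0).
  by apply: is_deriveM; exact: is_deriveX.
apply: is_derive_eq (is_deriveD lin quad) _.
rewrite /= !scaler0 add0r addr0 [c%:A]mulr1 [(_)%:A]mulr1 [K *: _]/(K * _) expr1.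
by change (c + K * (2 * t) = c + 2 * K * t); ring.
Qed.

Lemma L_smooth_lt0_trivial {L : R} {f} :
  L < 0 -> L_smooth L f -> forall u v : 'rV[R]_d, u = v.
Proof.
move=> L_lt0 [_ Lf] u v; apply/eqP.
rewrite -subr_eq0 -sqnorm_eq0 -sqr_enorm sqrf_eq0.
have : 0 <= enorm (grad f u - grad f v) := sqrtr_ge0 _.
have : 0 <= enorm (u - v) := sqrtr_ge0 _.
have := Lf u v; nra.
Qed.

Definition upper_quadratic (L : R) phi x g :=
  forall y, phi y <= phi x + dot g (y - x) + L / 2 * sqnorm (y - x).

(* The descent lemma: compare [t |-> f (x + t (y - x))] with its quadratic
   majorant on [0, 1]. *)
Lemma L_smooth_upper_quadratic (L : R) f x :
  0 <= L -> L_smooth L f -> upper_quadratic L f x (grad f x).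
Proof.
move=> L0 [df Lf] y.
set v := y - x; set c := dot (grad f x) v; set K := L / 2 * sqnorm v.
pose psi : R -> R :=
  (fun t : R => f (t *: v + x)) - (fun t : R => t * c + K * t ^+ 2).
have dpsi (t : R) :
    is_derive t 1 psi (dot (grad f (t *: v + x)) v - (c + 2 * K * t)).
  by apply: is_deriveB; [exact: is_derive_line | exact: is_derive_quadratic].
have : psi 1 <= psi 0.
  apply: (@ler0_derive1_le_cc _ psi 0 1) => //; last 3 first.
  - by apply: derivable_within_continuous => t _; have [] := dpsi t.
  - by rewrite in_itv /= ler01 lexx.
  - by rewrite in_itv /= ler01 lexx.
  move=> t; rewrite in_itv /= => /andP[t_ge0 _].
  rewrite derive1E derive_val subr_le0.
  suff : dot (grad f (t *: v + x) - grad f x) v <= (L * t) * sqnorm v.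
    by rewrite dotBl /c /K; lra.
  apply: dot_le_of_sqnorm_le; first by rewrite mulr_ge0 // ltW.
  rewrite exprMn -mulrA -sqnormZ; apply: sqnorm_le_of_enorm_le.
  by have := Lf (t *: v + x) x; rewrite addrK.
rewrite /psi !fctE scale1r scale0r add0r subrK /c /K; lra.
Qed.

Lemma upper_quadratic_avg (L : R) (n : nat) (phi : 'I_n -> 'rV[R]_d -> R)
    (g : 'I_n -> 'rV[R]_d) x :
  0 <= L -> (forall i, upper_quadratic L (phi i) x (g i)) ->
  upper_quadratic L (fun y => n%:R^-1 * \sum_(i < n) phi i y)
    x (n%:R^-1 *: \sum_(i < n) g i).
Proof.
move=> L0 phi_le y; set K := L / 2 * sqnorm (y - x).
have K0 : 0 <= K by rewrite mulr_ge0 ?sqnorm_ge0 ?divr_ge0.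
have nK : n%:R^-1 * (K *+ n) <= K.
  have [->|n_gt0] := posnP n; first by rewrite mulr0n mulr0.
  by rewrite -[K *+ _]mulr_natl mulrA mulVf ?mul1r // pnatr_eq0 -lt0n.
apply: le_trans (_ : n%:R^-1 * \sum_i (phi i x + dot (g i) (y - x) + K) <= _).
  by rewrite ler_wpM2l ?invr_ge0 ?ler0n //; apply: ler_sum => i _; exact: phi_le.
by rewrite !big_split /= sumr_const card_ord dotZl dot_suml !mulrDr lerD2l.
Qed.

Lemma favg_upper_quadratic (L : R) (M N : nat)
    (f : 'I_M -> 'I_N -> 'rV[R]_d -> R) x :
  0 <= L -> (forall m j, L_smooth L (f m j)) ->
  upper_quadratic L (favg f) x
    (M%:R^-1 *: \sum_(m < M) (N%:R^-1 *: \sum_(j < N) grad (f m j) x)).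
Proof.
move=> L0 f_smooth; apply: upper_quadratic_avg => // m.
apply: upper_quadratic_avg => // j.
exact: L_smooth_upper_quadratic.
Qed.

(* For [L > 0] evaluate the bound at [x - g / L]; for [L = 0] it decreases
   without bound along [- g] unless [g = 0]. *)
Lemma upper_quadratic_sqnorm_le (L m : R) phi x g :
  0 <= L -> upper_quadratic L phi x g -> (forall y, m <= phi y) ->
  sqnorm g <= 2 * L * (phi x - m).
Proof.
move=> L0 phi_le m_le.
have step s : 0 <= phi x - m - s * sqnorm g + L / 2 * s ^+ 2 * sqnorm g.
  have := phi_le (x - s *: g); have := m_le (x - s *: g).
  have -> : x - s *: g - x = (- s) *: g by rewrite addrAC subrr add0r scaleNr.
  rewrite dotZr dotvv sqnormZ sqrrN mulrA; lra.
move: L0; rewrite le_eqVlt => /predU1P[L_eq0 | L_gt0].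
  rewrite -L_eq0 mulr0 mul0r.
  have [-> // | g_neq0] := eqVneq (sqnorm g) 0.
  have := step ((phi x - m + 1) / sqnorm g).
  by rewrite -L_eq0 !mul0r addr0 divfK //; lra.
have := step L^-1.
have -> : phi x - m - L^-1 * sqnorm g + L / 2 * L^-1 ^+ 2 * sqnorm g
        = phi x - m - sqnorm g / (2 * L) by field; rewrite gt_eqF.
by rewrite subr_ge0 ler_pdivrMr ?mulr_gt0 // mulrC.
Qed.

Lemma favg_grad_sqnorm_le (L : R) (M N : nat)
    (f : 'I_M -> 'I_N -> 'rV[R]_d -> R) x xstar :
  (forall m j, L_smooth L (f m j)) -> (forall y, favg f xstar <= favg f y) ->
  sqnorm (M%:R^-1 *: \sum_(m < M) (N%:R^-1 *: \sum_(j < N) grad (f m j) x))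
    <= 2 * L * (favg f x - favg f xstar).
Proof.
move=> f_smooth f_min; have [L_lt0 | L_ge0] := ltP L 0; last first.
  by apply: upper_quadratic_sqnorm_le => //; exact: favg_upper_quadratic.
(* Possible only if [d = 0] or there is no [f m j] at all. *)
have trivial (m : 'I_M) (j : 'I_N) : forall u v : 'rV[R]_d, u = v.
  exact: L_smooth_lt0_trivial L_lt0 (f_smooth m j).
have -> : favg f x = favg f xstar.
  congr (_ * _); apply: eq_bigr => m _; congr (_ * _); apply: eq_bigr => j _.
  by rewrite (trivial m j x xstar).
rewrite subrr mulr0 big1 ?scaler0 ?sqnorm0 // => m _.
by rewrite big1 ?scaler0 // => j _; exact: trivial.
Qed.

End Smoothness.

Lemma big_disjoint_cover {V : nmodType} {M Rn : nat} (S : 'I_Rn -> {set 'I_M})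
    (F : 'I_M -> V) :
  (forall r1 r2, r1 != r2 -> [disjoint S r1 & S r2]) ->
  (forall m, exists r, m \in S r) ->
  \sum_(r < Rn) \sum_(m in S r) F m = \sum_(m < M) F m.
Proof.
move=> S_disj S_cover; under eq_bigr do rewrite big_mkcond.
rewrite exchange_big; apply: eq_bigr => m _ /=.
have [r0 m_r0] := S_cover m.
rewrite (bigD1 r0) //= m_r0 big1 ?addr0 // => r r_neq.
by rewrite (disjointFr (S_disj r0 r _) m_r0) // eq_sym.
Qed.

Section CohortMean.
Context {R : realType} {d M N Rn : nat} (C : nat) (S : 'I_Rn -> {set 'I_M}).

Definition cohort_mean (F : 'I_Rn -> 'I_M -> 'I_N -> 'rV[R]_d) : 'rV[R]_d :=
  Rn%:R^-1 *: \sum_(r < Rn) (C%:R^-1 *: \sum_(m in S r)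
                                (N%:R^-1 *: \sum_(j < N) F r m j)).

Definition cohort_meanR (F : 'I_Rn -> 'I_M -> 'I_N -> R) : R :=
  Rn%:R^-1 * \sum_(r < Rn) (C%:R^-1 * \sum_(m in S r)
                               (N%:R^-1 * \sum_(j < N) F r m j)).

Lemma cohort_meanD (F G : 'I_Rn -> 'I_M -> 'I_N -> 'rV[R]_d) :
  cohort_mean (fun r m j => F r m j + G r m j) = cohort_mean F + cohort_mean G.
Proof.
rewrite /cohort_mean -scalerDr -big_split; congr (_ *: _).
apply: eq_bigr => r _ /=; rewrite -scalerDr -big_split; congr (_ *: _).
apply: eq_bigr => m _ /=.
by rewrite -scalerDr -big_split.
Qed.

Lemma cohort_meanRE F :
  cohort_meanR F
    = (Rn%:R * C%:R * N%:R)^-1 *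
        \sum_(r < Rn) \sum_(m in S r) \sum_(j < N) F r m j.
Proof.
rewrite /cohort_meanR !invfM -!mulrA !mulr_sumr; apply: eq_bigr => r _.
by rewrite !mulr_sumr; apply: eq_bigr => m _; rewrite mulrCA.
Qed.

Lemma cohort_meanRZ a F :
  cohort_meanR (fun r m j => a * F r m j) = a * cohort_meanR F.
Proof.
rewrite !cohort_meanRE mulrCA; congr (_ * _); rewrite mulr_sumr.
apply: eq_bigr => r _; rewrite mulr_sumr; apply: eq_bigr => m _.
by rewrite mulr_sumr.
Qed.

Lemma ler_cohort_meanR F G : (forall r m j, F r m j <= G r m j) ->
  cohort_meanR F <= cohort_meanR G.
Proof.
move=> FG; rewrite !cohort_meanRE ler_wpM2l ?invr_ge0 ?ler0n //.
by do 3 (apply: ler_sum => ? _).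
Qed.

Hypothesis card_S : forall r, #|S r| = C.

Lemma sqnorm_cohort_mean_le F :
  sqnorm (cohort_mean F) <= cohort_meanR (fun r m j => sqnorm (F r m j)).
Proof.
have avg_ord (n : nat) (G : 'I_n -> 'rV[R]_d) :
    sqnorm (n%:R^-1 *: \sum_(i < n) G i) <= n%:R^-1 * \sum_(i < n) sqnorm (G i).
  by have := sqnorm_avg_le predT G; rewrite cardT size_enum_ord.
rewrite /cohort_mean /cohort_meanR.
apply: le_trans (avg_ord _ _) _; rewrite ler_wpM2l ?invr_ge0 ?ler0n //.
apply: ler_sum => r _.
have := @sqnorm_avg_le R d _ (S r); rewrite card_S => avg_S.
apply: le_trans (avg_S _) _; rewrite ler_wpM2l ?invr_ge0 ?ler0n //.
by apply: ler_sum => m _; exact: avg_ord.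
Qed.

Hypotheses (M_eq : M = (C * Rn)%N)
  (S_disj : forall r1 r2, r1 != r2 -> [disjoint S r1 & S r2])
  (S_cover : forall m, exists r, m \in S r).

Lemma cohort_mean_perm (g : 'I_M -> 'I_N -> 'rV[R]_d) (p : 'I_M -> {perm 'I_N}) :
  cohort_mean (fun _ m j => g m (p m j))
    = M%:R^-1 *: \sum_(m < M) (N%:R^-1 *: \sum_(j < N) g m j).
Proof.
have permE m : \sum_(j < N) g m (p m j) = \sum_(j < N) g m j.
  by rewrite [RHS](reindex_inj (@perm_inj _ (p m))).
rewrite /cohort_mean; under eq_bigr do under eq_bigr do rewrite permE.
rewrite -scaler_sumr big_disjoint_cover // scalerA -invfM -natrM.
by rewrite mulnC -M_eq.
Qed.

End CohortMean.

Theorem lemma7 (R : realType) (d M N C Rn : nat)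
  (f : 'I_M -> 'I_N -> 'rV[R]_d -> R) (L gamma eta theta : R)
  (S : nat -> 'I_Rn -> ({set 'I_M})) (pi : nat -> 'I_M -> ({perm 'I_N}))
  (x0 xstar : 'rV[R]_d) :
  M = (C * Rn)%N ->
  0 < gamma -> 0 < eta -> 0 < theta ->
  (forall t r, #|S t r| = C) ->
  (forall t r1 r2, r1 != r2 -> [disjoint S t r1 & S t r2]) ->
  (forall t m, exists r, m \in S t r) ->
  (forall m j, L_smooth L (f m j)) ->
  (forall x, favg f xstar <= favg f x) ->
  forall t : nat,
  let G := fun t m j => grad (f m (pi t m j)) in
  let xt := meta_iter C gamma eta theta S G x0 t in
  let xloc := fun (r : 'I_Rn) (m : 'I_M) (j : 'I_N) =>
      local_iter gamma (G t m) (server_iter C gamma eta (S t) (G t) xt r) j in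
  let Vt := (Rn%:R * C%:R * N%:R)^-1 *
      \sum_(r < Rn) \sum_(m in S t r) \sum_(j < N) sqnorm (xt - xloc r m j) in
  sqnorm ((Rn%:R)^-1 *: \sum_(r < Rn) ((C%:R)^-1 *: \sum_(m in S t r)
            ((N%:R)^-1 *: \sum_(j < N) G t m j (xloc r m j))))
  <= 2 * L ^+ 2 * Vt + 4 * L * (favg f xt - favg f xstar).
Proof.
move=> M_eq _ _ _ card_S S_disj S_cover f_smooth f_min t; cbv zeta.
set G := fun t m j => grad (f m (pi t m j)).
set xt := meta_iter C gamma eta theta S G x0 t.
set xloc := fun (r : 'I_Rn) (m : 'I_M) (j : 'I_N) =>
  local_iter gamma (G t m) (server_iter C gamma eta (S t) (G t) xt r) j.
set Vt := (Rn%:R * C%:R * N%:R)^-1 * _.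
rewrite -[X in sqnorm X]/(cohort_mean C (S t)
                              (fun r m j => G t m j (xloc r m j))).
pose drift := cohort_mean C (S t)
                (fun r m j => G t m j (xloc r m j) - G t m j xt).
pose grad_f := M%:R^-1 *: \sum_(m < M) (N%:R^-1 *: \sum_(j < N) grad (f m j) xt).
have -> : cohort_mean C (S t) (fun r m j => G t m j (xloc r m j))
          = drift + grad_f.
  rewrite /grad_f -(cohort_mean_perm _ _ M_eq (S_disj t) (S_cover t)
                      (fun m j => grad (f m j) xt) (pi t)) -cohort_meanD.
  by congr cohort_mean; do 3 apply/funext => ?; rewrite subrK.
have drift_le : sqnorm drift <= L ^+ 2 * Vt.
  apply: le_trans (sqnorm_cohort_mean_le _ _ (card_S t) _) _.
  rewrite /Vt -(cohort_meanRE C (S t) (fun r m j => sqnorm (xt - xloc r m j))).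
  rewrite -cohort_meanRZ; apply: ler_cohort_meanR => r m j.
  rewrite -[xt - _]opprB sqnormN; apply: sqnorm_le_of_enorm_le.
  exact: (f_smooth m (pi t m j)).2.
have grad_le : sqnorm grad_f <= 2 * L * (favg f xt - favg f xstar).
  exact: favg_grad_sqnorm_le.
apply: le_trans (sqnormD_le _ _) _; lra.
Qed.
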